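(* Let $K=\mathbb{Q}(\zeta)$ be a cubic field, where $\zeta$ is a root of $\mathcal{C}(x,1)$ and $\mathcal{C}=(a,b,c,d)$ is the canonical binary cubic form of $K$. Let $\rho=a\zeta$ and $\omega=a\zeta^2+b\zeta$, so that $\mathcal{O}_K=\mathbb{Z}+\mathbb{Z}\rho+\mathbb{Z}\omega$. For $\alpha=u+x\rho+y\omega$ with $u,x,y\in\mathbb{Q}$ define \[ N(\alpha)=\begin{pmatrix} u & -ad\,y & -ad\,x-bd\,y\\ x & u-bx-cy & -cx-dy\\ y & ax & u-cy\end{pmatrix}. \] Let $M_{\mathbb{Z}}$ (resp. $M_{\mathbb{Q}}$) be the set of all matrices of this form with $u,x,y\in\mathbb{Z}$ (resp. $u,x,y\in\mathbb{Q}$). Then $\phi:\mathcal{O}_K\to M_{\mathbb{Z}}$, $\alpha\mapsto N(\alpha)$, is a ring isomorphism and $\psi:K\to M_{\mathbb{Q}}$, $\alpha\mapsto N(\alpha)$, is a field isomorphism (with the usual matrix addition and multiplication). Moreover, for every $\alpha\in K$, the trace of $\alpha$ equals the trace of $N(\alpha)$ and the norm of $\alpha$ equals $\det N(\alpha)$.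
   Context: A binary cubic form is $\mathcal{C}(x,y)=ax^3+bx^2y+cxy^2+dy^3$ with $a,b,c,d\in\mathbb{Z}$, irreducible over $\mathbb{Q}$, abbreviated $(a,b,c,d)$; its discriminant is $b^2c^2+18abcd-4ac^3-4b^3d-27a^2d^2$. The Davenport–Heilbronn map sends (the conjugacy class of) a cubic field $L$ with integral basis $\{1,\omega_2,\omega_3\}$ to the $\mathrm{GL}_2(\mathbb{Z})$-class of the form $\frac{1}{\mathrm{disc}(L)}N\big((\omega_2-\omega_2')x-(\omega_3-\omega_3')y\big)$, giving a bijection between cubic fields (up to conjugacy) and certain $\mathrm{GL}_2(\mathbb{Z})$-classes of binary cubic forms of the same discriminant. The canonical binary cubic form of a cubic field $K$ is a binary cubic form $\mathcal{C}$ in the image of the Davenport–Heilbronn map corresponding to $K$, with discriminant equal to that of $K$ and with $K=\mathbb{Q}(\zeta)$, $\mathcal{C}(\zeta,1)=0$; for such $\mathcal{C}$, $\{1,a\zeta,a\zeta^2+b\zeta\}$ is an integral basis of $\mathcal{O}_K$ (Belabas). *)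

From HB Require Import structures.
From mathcomp Require Import all_boot all_order all_algebra all_field.
Set Implicit Arguments. Unset Strict Implicit. Unset Printing Implicit Defensive.
Import Order.TTheory GRing.Theory Num.Theory.
Local Open Scope ring_scope.

Definition cubic_poly (a b c d : int) : {poly rat} :=
  a%:~R%:P * 'X^3 + b%:~R%:P * 'X^2 + c%:~R%:P * 'X + d%:~R%:P.

(* The binary cubic form (a,b,c,d) is irreducible over Q:
   a <> 0 (otherwise y divides the form) and C(x,1) is irreducible. *)
Definition cubic_form_irreducible (a b c d : int) : Prop :=
  a != 0 /\ irreducible_poly (cubic_poly a b c d).

Definition is_integral (L : fieldExtType rat) (z : L) : Prop :=
  exists p : {poly int}, p \is monic /\ root (map_poly (fun n : int => n%:~R) p) z.

Definition mult_mx (L : fieldExtType rat) (z : L) : 'M[rat]_(\dim {:L}) :=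
  passmx.mxof (vbasis fullv) (vbasis fullv) (amulr z).
Definition field_trace (L : fieldExtType rat) (z : L) : rat := \tr (mult_mx z).
Definition field_norm (L : fieldExtType rat) (z : L) : rat := \det (mult_mx z).

Definition Nmat (a b c d : int) (u x y : rat) : 'M[rat]_3 :=
  let A : rat := a%:~R in let B : rat := b%:~R in
  let Cc : rat := c%:~R in let D : rat := d%:~R in
  \matrix_(i < 3, j < 3) nth 0 (nth [::]
    [:: [:: u ; - (A * D) * y ; - (A * D) * x - (B * D) * y ];
        [:: x ; u - B * x - Cc * y ; - Cc * x - D * y ];
        [:: y ; A * x ; u - Cc * y ] ] i) j.

Definition MQ (a b c d : int) : 'M[rat]_3 -> Prop :=
  fun M => exists u x y : rat, M = Nmat a b c d u x y.
Definition MZ (a b c d : int) : 'M[rat]_3 -> Prop :=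
  fun M => exists u x y : int, M = Nmat a b c d u%:~R x%:~R y%:~R.

From HB Require Import structures.
From mathcomp Require Import all_boot all_order all_algebra all_field.
From mathcomp Require Import ring.
Import Order.TTheory GRing.Theory Num.Theory.
Local Open Scope ring_scope.

(* Since a != 0 and zeta generates the cubic field K, {1, rho, omega} is a
   Q-basis of K.  The relation C(zeta, 1) = 0 yields the multiplication table
   rho^2 = a omega - b rho, rho omega = - c rho - a d and
   omega^2 = - c omega - d rho - b d, from which N(alpha) is exactly the matrix
   of multiplication by alpha in this basis (its columns are the coordinates of
   alpha, alpha rho and alpha omega).  So alpha |-> N(alpha) is an injective
   ring morphism onto M_Q, it maps O_K = Z + Z rho + Z omega onto M_Z, and the
   trace and norm of alpha, being basis-independent invariants of the
   multiplication map, are the trace and determinant of N(alpha). *)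

Lemma scaler_in_alg (R : pzSemiRingType) (V : lSemiAlgType R) (k : R) (v : V) :
  k *: v = in_alg V k * v.
Proof. by rewrite in_algE mulr_algl. Qed.

Section MultiplicationTable.

Context {R : comNzRingType} {V : comAlgType R} {A B C D : R} {rho omega : V}.
Hypotheses (mul_rr : rho * rho = A *: omega - B *: rho)
  (mul_ro : rho * omega = - (C *: rho) - (A * D)%:A)
  (mul_oo : omega * omega = - (C *: omega) - D *: rho - (B * D)%:A).

Lemma mul_coords (u x y u' x' y' : R) :
  (u%:A + x *: rho + y *: omega) * (u'%:A + x' *: rho + y' *: omega) =
    (u * u' - A * D * y * x' - (A * D * x + B * D * y) * y')%:A
  + (x * u' + (u - B * x - C * y) * x' + (- C * x - D * y) * y') *: rho
  + (y * u' + A * x * x' + (u - C * y) * y') *: omega.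
Proof.
apply/eqP; rewrite -subr_eq0; apply/eqP.
transitivity ((x * x') *: (rho * rho - (A *: omega - B *: rho))
  + (x * y' + y * x') *: (rho * omega - (- (C *: rho) - (A * D)%:A))
  + (y * y') *: (omega * omega - (- (C *: omega) - D *: rho - (B * D)%:A))).
  by rewrite !scaler_in_alg; ring.
by rewrite mul_rr mul_ro mul_oo !subrr !scaler0 !addr0.
Qed.

End MultiplicationTable.

Lemma span_powers3 {F : fieldType} {L : fieldExtType F} {x : L} :
  \dim {:L} = 3%N -> <<1%VS; x>>%VS = fullv -> <<[:: 1; x; x ^+ 2]%R>>%VS = fullv.
Proof.
move=> dimL x_gen; apply/eqP; rewrite eqEsubv subvf /=; apply/subvP => v _.
have v_adj : v \in <<1%VS; x>>%VS by rewrite x_gen memvf.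
have deg_x : adjoin_degree 1%VS x = 3%N.
  by have := dim_Fadjoin 1%AS x; rewrite x_gen dimL dimv1 muln1.
have := size_Fadjoin_poly 1%VS x v; rewrite deg_x => size_p.
have /polyOverP p_over := Fadjoin_polyOver 1%VS x v.
rewrite -(Fadjoin_poly_eq v_adj) (horner_coef_wide _ size_p).
rewrite !big_ord_recr big_ord0 /= add0r.
have [r0 ->] := vlineP _ _ (p_over 0%N).
have [r1 ->] := vlineP _ _ (p_over 1%N).
have [r2 ->] := vlineP _ _ (p_over 2%N).
rewrite !mulr_algl !rpredD ?rpredZ // memv_span // !inE eqxx ?orbT //.
Qed.

Section Coordinates3.

Variables (K : fieldType) (vT : vectType K) (e0 e1 e2 : vT).

Lemma coord_free3 (u x y : K) (j : 'I_3) : free [:: e0; e1; e2] ->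
  coord [tuple e0; e1; e2] j (u *: e0 + x *: e1 + y *: e2) = [:: u; x; y]`_j.
Proof.
move=> free_e; have := coord_sum_free (fun i : 'I_3 => [:: u; x; y]`_i) j free_e.
by rewrite !big_ord_recr big_ord0 /= add0r.
Qed.

Lemma mem_span3 (v : vT) : v \in <<[:: e0; e1; e2]>>%VS ->
  exists u x y, v = u *: e0 + x *: e1 + y *: e2.
Proof.
move=> /coord_span ->; rewrite !big_ord_recr big_ord0 /= add0r.
by do 3!eexists.
Qed.

End Coordinates3.

Lemma coord_tcast (K : fieldType) (vT : vectType K) m n (eq_mn : m = n)
    (X : m.-tuple vT) (j : 'I_n) (v : vT) :
  coord (tcast eq_mn X) j v = coord X (cast_ord (esym eq_mn) j) v.
Proof. by case: n / eq_mn j => j; rewrite tcast_id cast_ord_id. Qed.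

Section BasisChange.

Context {F : fieldType} {vT : vectType F} {e g : (\dim {:vT}).-tuple vT}.
Hypotheses (e_basis : basis_of fullv e) (g_basis : basis_of fullv g).

Lemma mxof_basis_change (h : 'End(vT)) :
  passmx.mxof e e h = passmx.mxof e g \1 *m passmx.mxof g g h *m passmx.mxof g e \1.
Proof. by rewrite -!(passmx.mxof_comp _ _ g_basis) comp_lfun1r comp_lfun1l. Qed.

Lemma mxof_basis_changeK :
  passmx.mxof g e \1 *m passmx.mxof e g \1 = 1%:M.
Proof.
rewrite -(passmx.mxof_comp _ _ e_basis) comp_lfun1l.
by rewrite passmx.mxof1 // (basis_free g_basis).
Qed.

Lemma mxtrace_mxof_basis (h : 'End(vT)) :
  \tr (passmx.mxof e e h) = \tr (passmx.mxof g g h).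
Proof.
by rewrite mxof_basis_change mxtrace_mulC mulmxA mxof_basis_changeK mul1mx.
Qed.

Lemma det_mxof_basis (h : 'End(vT)) :
  \det (passmx.mxof e e h) = \det (passmx.mxof g g h).
Proof.
rewrite mxof_basis_change !det_mulmx mulrC mulrA -det_mulmx.
by rewrite mxof_basis_changeK det1 mul1r.
Qed.

End BasisChange.

Lemma mxtrace_castmx (R : pzRingType) m n (eq_mn : m = n) (M : 'M[R]_m) :
  \tr (castmx (eq_mn, eq_mn) M) = \tr M.
Proof. by case: n / eq_mn. Qed.

Lemma det_castmx (R : comPzRingType) m n (eq_mn : m = n) (M : 'M[R]_m) :
  \det (castmx (eq_mn, eq_mn) M) = \det M.
Proof. by case: n / eq_mn. Qed.

Section Nmat.

Variables a b c d : int.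

Lemma Nmat1 : Nmat a b c d 1 0 0 = 1.
Proof.
apply/matrixP => i j; rewrite !mxE.
by case: i => [[|[|[|//]]] ?]; case: j => [[|[|[|//]]] ?] /=; ring.
Qed.

Lemma NmatD (u x y u' x' y' : rat) :
  Nmat a b c d (u + u') (x + x') (y + y') = Nmat a b c d u x y + Nmat a b c d u' x' y'.
Proof.
apply/matrixP => i j; rewrite !mxE.
by case: i => [[|[|[|//]]] ?]; case: j => [[|[|[|//]]] ?] /=; ring.
Qed.

Lemma NmatM (u x y u' x' y' : rat) :
  let A : rat := a%:~R in let B : rat := b%:~R in
  let C : rat := c%:~R in let D : rat := d%:~R in
  Nmat a b c d u x y * Nmat a b c d u' x' y' =
  Nmat a b c d (u * u' - A * D * y * x' - (A * D * x + B * D * y) * y')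
    (x * u' + (u - B * x - C * y) * x' + (- C * x - D * y) * y')
    (y * u' + A * x * x' + (u - C * y) * y').
Proof.
apply/matrixP => i j; rewrite !mxE !big_ord_recr big_ord0 /= !mxE.
by case: i => [[|[|[|//]]] ?]; case: j => [[|[|[|//]]] ?] /=; ring.
Qed.

Lemma Nmat_inj (u x y u' x' y' : rat) :
  Nmat a b c d u x y = Nmat a b c d u' x' y' -> [/\ u = u', x = x' & y = y'].
Proof.
move=> eqN; have col0 (i : 'I_3) := congr1 (fun M : 'M_3 => M i ord0) eqN.
by move: (col0 ord0) (col0 (inord 1)) (col0 ord_max); rewrite !mxE !inordK.
Qed.

End Nmat.

Section CubicField.

Variables (L : fieldExtType rat) (a b c d : int) (zeta : L).

Local Notation A := (a%:~R : rat).
Local Notation B := (b%:~R : rat).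
Local Notation C := (c%:~R : rat).
Local Notation D := (d%:~R : rat).
Local Notation rho := (a%:~R * zeta : L).
Local Notation omega := (a%:~R * zeta ^+ 2 + b%:~R * zeta : L).

Definition Nbasis : 3.-tuple L := [tuple 1; rho; omega].

Definition Nmx (z : L) : 'M[rat]_3 :=
  Nmat a b c d (coord Nbasis (inord 0) z) (coord Nbasis (inord 1) z)
    (coord Nbasis (inord 2) z).

Hypotheses (dimL : \dim {:L} = 3%N) (a_neq0 : a != 0)
  (zeta_root : root (map_poly (in_alg L) (cubic_poly a b c d)) zeta)
  (zeta_gen : <<1%VS; zeta>>%VS = fullv).

Lemma cubic_root_eq :
  a%:~R * zeta ^+ 3 + b%:~R * zeta ^+ 2 + c%:~R * zeta + d%:~R = 0 :> L.
Proof.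
move: zeta_root; rewrite /root /cubic_poly !(rmorphD, rmorphM) /=.
rewrite !map_polyC !map_polyX !hornerE /= => /eqP <-.
by rewrite !scaler_int; ring.
Qed.

Lemma mul_rho_rho : rho * rho = A *: omega - B *: rho.
Proof. by rewrite !scaler_in_alg; ring. Qed.

Lemma mul_rho_omega : rho * omega = - (C *: rho) - (A * D)%:A.
Proof.
(* rho omega + c rho + a d = a C(zeta, 1) *)
apply/eqP; rewrite -subr_eq0; apply/eqP.
by rewrite -(mulr0 (a%:~R : L)) -cubic_root_eq !scaler_in_alg; ring.
Qed.

Lemma mul_omega_omega : omega * omega = - (C *: omega) - D *: rho - (B * D)%:A.
Proof.
(* omega^2 + c omega + d rho + b d = (a zeta + b) C(zeta, 1) *)
apply/eqP; rewrite -subr_eq0; apply/eqP.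
by rewrite -(mulr0 (a%:~R * zeta + b%:~R : L)) -cubic_root_eq !scaler_in_alg; ring.
Qed.

Lemma span_Nbasis : <<Nbasis>>%VS = fullv.
Proof.
apply/eqP; rewrite eqEsubv subvf -(span_powers3 dimL zeta_gen).
have A_neq0 : A != 0 by rewrite intr_eq0.
have intr_scale (n : int) (v : L) : n%:~R * v = n%:~R *: v by rewrite scaler_int mulrzl.
have Nbasis_span (w : L) : w \in [:: 1; rho; omega] -> w \in <<Nbasis>>%VS.
  exact: memv_span.
have zetaE : zeta = A^-1 *: rho by rewrite intr_scale scalerA mulVf ?scale1r.
have zeta2E : zeta ^+ 2 = A^-1 *: (omega - b%:~R * zeta).
  by rewrite addrK intr_scale scalerA mulVf ?scale1r.
have zeta_in : zeta \in <<Nbasis>>%VS.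
  by rewrite [X in X \in _]zetaE rpredZ // Nbasis_span // !inE eqxx orbT.
apply/span_subvP => w; rewrite !inE => /or3P[] /eqP -> //.
  by rewrite Nbasis_span ?mem_head.
rewrite [X in X \in _]zeta2E rpredZ // rpredB //; last by rewrite intr_scale rpredZ.
by rewrite Nbasis_span // !inE eqxx !orbT.
Qed.

Lemma free_Nbasis : free Nbasis.
Proof. by rewrite /free span_Nbasis dimL. Qed.

Lemma Nbasis_decomp (z : L) : exists u x y, z = u%:A + x *: rho + y *: omega.
Proof. by apply: mem_span3; rewrite -[<<_>>%VS]/<<Nbasis>>%VS span_Nbasis memvf. Qed.

Lemma Nmx_coords (u x y : rat) :
  Nmx (u%:A + x *: rho + y *: omega) = Nmat a b c d u x y.
Proof. by rewrite /Nmx !coord_free3 ?free_Nbasis // !inordK. Qed.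

Lemma Nmx1 : Nmx 1 = 1.
Proof.
by rewrite -(Nmat1 a b c d) -Nmx_coords !scale0r !addr0 scale1r.
Qed.

Lemma NmxD (z w : L) : Nmx (z + w) = Nmx z + Nmx w.
Proof. by rewrite /Nmx !linearD /= NmatD. Qed.

Lemma NmxM (z w : L) : Nmx (z * w) = Nmx z * Nmx w.
Proof.
have [u [x [y ->]]] := Nbasis_decomp z.
have [u' [x' [y' ->]]] := Nbasis_decomp w.
by rewrite (mul_coords mul_rho_rho mul_rho_omega mul_omega_omega) !Nmx_coords NmatM.
Qed.

Lemma Nmx_inj : injective Nmx.
Proof.
move=> z w; have [u [x [y ->]]] := Nbasis_decomp z.
have [u' [x' [y' ->]]] := Nbasis_decomp w.
by rewrite !Nmx_coords => /Nmat_inj[-> -> ->].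
Qed.

Lemma Nmx_col0 (z : L) (l : 'I_3) : Nmx z l ord0 = coord Nbasis l z.
Proof.
rewrite mxE; case: l => [[|[|[|//]]] ?] /=; congr coord; apply: val_inj.
all: by rewrite /= inordK.
Qed.

Lemma coord_mul_Nbasis (z : L) (k l : 'I_3) :
  coord Nbasis l (Nbasis`_k * z) = Nmx z l k.
Proof.
rewrite -Nmx_col0 mulrC NmxM mxE (bigD1 k) //= big1 => [|m m_neq_k].
  by rewrite Nmx_col0 coord_free ?free_Nbasis // eqxx mulr1 addr0.
by rewrite Nmx_col0 coord_free ?free_Nbasis // eq_sym (negPf m_neq_k) mulr0.
Qed.

Lemma basis_Nbasis : basis_of fullv (tcast (esym dimL) Nbasis).
Proof. by rewrite /basis_of val_tcast span_Nbasis eqxx free_Nbasis. Qed.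

(* [passmx.mxof] acts on row vectors, whence the transpose. *)
Lemma mxof_amulr (z : L) :
  passmx.mxof (tcast (esym dimL) Nbasis) (tcast (esym dimL) Nbasis) (amulr z) =
  castmx (esym dimL, esym dimL) (Nmx z)^T.
Proof.
apply/matrixP => i j; rewrite castmxE [RHS]mxE [LHS]mxE /= passmx.vecof_delta.
by rewrite -passmx.coord_rVof lfunE /= coord_tcast val_tcast -coord_mul_Nbasis.
Qed.

Lemma field_traceE (z : L) : field_trace z = \tr (Nmx z).
Proof.
rewrite /field_trace /mult_mx (mxtrace_mxof_basis (vbasisP fullv) basis_Nbasis).
by rewrite mxof_amulr mxtrace_castmx mxtrace_tr.
Qed.

Lemma field_normE (z : L) : field_norm z = \det (Nmx z).
Proof.
rewrite /field_norm /mult_mx (det_mxof_basis (vbasisP fullv) basis_Nbasis).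
by rewrite mxof_amulr det_castmx det_tr.
Qed.

Lemma Nmx_int_coords (u x y : int) :
  Nmx (u%:~R + x%:~R * rho + y%:~R * omega) = Nmat a b c d u%:~R x%:~R y%:~R.
Proof. by rewrite -Nmx_coords !scaler_int !mulrzl. Qed.

Lemma MQ_Nmx (M : 'M[rat]_3) : MQ a b c d M <-> exists z, Nmx z = M.
Proof.
split=> [[u [x [y ->]]] | [z <-]]; last by do 3!eexists.
by exists (u%:A + x *: rho + y *: omega); rewrite Nmx_coords.
Qed.

End CubicField.

Theorem proposition2p2 (L : fieldExtType rat) (a b c d : int) (zeta : L) :
  \dim {:L} = 3%N ->
  cubic_form_irreducible a b c d ->
  root (map_poly (in_alg L) (cubic_poly a b c d)) zeta ->
  <<1%VS; zeta>>%VS = fullv ->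
  let rho := a%:~R * zeta in
  let omega := a%:~R * zeta ^+ 2 + b%:~R * zeta in
  (forall z : L, is_integral z <->
     exists u x y : int, z = u%:~R + x%:~R * rho + y%:~R * omega) ->
  exists psi : L -> 'M[rat]_3,
    [/\ forall u x y : rat,
          psi (u%:A + x *: rho + y *: omega) = Nmat a b c d u x y,
        (* psi : K -> M_Q is a field isomorphism *)
        [/\ psi 1 = 1,
            forall z w, psi (z + w) = psi z + psi w,
            forall z w, psi (z * w) = psi z * psi w,
            injective psi &
            forall M, MQ a b c d M <-> exists z, psi z = M],
        (* phi = psi restricted to O_K is a ring isomorphism O_K -> M_Z *)
        [/\ forall z, is_integral z -> MZ a b c d (psi z) &
            forall M, MZ a b c d M -> exists2 z, is_integral z & psi z = M],
        (forall z, field_trace z = \tr (psi z)) &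
        (forall z, field_norm z = \det (psi z))].
Proof.
move=> dimL [a_neq0 _] zeta_root zeta_gen rho omega integralE.
exists (Nmx L a b c d zeta); split.
- exact: Nmx_coords.
- by split; [exact: Nmx1 | exact: NmxD | exact: NmxM | exact: Nmx_inj | exact: MQ_Nmx].
- split=> [z /integralE[u [x [y ->]]] | M [u [x [y ->]]]].
    by exists u, x, y; rewrite Nmx_int_coords.
  exists (u%:~R + x%:~R * rho + y%:~R * omega); last exact: Nmx_int_coords.
  by apply/integralE; exists u, x, y.
- exact: field_traceE.
- exact: field_normE.
Qed.
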